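(* In the age-structured map $h$ of the context, let $\bm{\hat{y}}$ be an equilibrium whose adult part $\bm{\hat{x}}$ has $\hat{x}_i=0$ for $i$ in a nonempty set $Z\subseteq\mathcal{M}$ and $\hat{x}_i>0$ for $i\in\mathcal{M}\setminus Z$. Assume that for every $i\in\mathcal{M}$, $\hat{x}_i=0$ implies $\hat{x}_iG_i(\bm{\hat{x}})=0$. Let $\bm{\hat{J}}$ be the Jacobian of $h$ at $\bm{\hat{y}}$ and let $\bm{J}^\bullet$ be its principal submatrix indexed by all age classes of the species in $\mathcal{M}\setminus Z$, and assume $\rho(\bm{J}^\bullet)<1$ (vacuous if $Z=\mathcal{M}$). If $$|G_i(\bm{\hat{x}})|\prod_{a=0}^{\delta_i-1}\sigma_{a\mid i} < z_i\quad\text{for all } i\in Z,$$ then $\rho(\bm{\hat{J}})<1$, i.e. $\bm{\hat{y}}$ is locally asymptotically stable.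
   Context: Let $m\ge1$, $\mathcal{M}=\{1,\dots,m\}$. For each species $i$: delay $\delta_i\in\{0,1,2,\dots\}$; survival probabilities $\sigma_{a\mid i}\in(0,1]$ for $a=0,\dots,\delta_i-1$, adult survival $\sigma_{\delta_i\mid i}\in(0,1)$, adult mortality $z_i=1-\sigma_{\delta_i\mid i}$; empty products equal $1$. $G_i:\mathbb{R}^m\to\mathbb{R}$ differentiable. State $\bm{y}=(y_{a\mid i})$, $i\in\mathcal{M}$, $0\le a\le\delta_i$; adults $\bm{x}=(y_{\delta_1\mid1},\dots,y_{\delta_m\mid m})^\top$. Map $h$: if $\delta_i>0$, $h_{0\mid i}(\bm{y})=G_i(\bm{x})y_{\delta_i\mid i}$, $h_{a\mid i}(\bm{y})=\sigma_{a-1\mid i}y_{a-1\mid i}$ ($1\le a\le\delta_i-1$), $h_{\delta_i\mid i}(\bm{y})=\sigma_{\delta_i-1\mid i}y_{\delta_i-1\mid i}+\sigma_{\delta_i\mid i}y_{\delta_i\mid i}$; if $\delta_i=0$, $h_{0\mid i}(\bm{y})=\sigma_{0\mid i}y_{0\mid i}+G_i(\bm{x})y_{0\mid i}$. $\rho(\cdot)$ is spectral radius; an equilibrium is locally asymptotically stable if the Jacobian of $h$ there has spectral radius $<1$. *)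

From HB Require Import structures.
From mathcomp Require Import all_boot all_order all_algebra.
From mathcomp Require Import all_classical all_reals all_analysis.
From mathcomp Require Import complex.
Set Implicit Arguments. Unset Strict Implicit. Unset Printing Implicit Defensive.
Import Order.TTheory GRing.Theory Num.Theory.
Local Open Scope ring_scope.
Local Open Scope classical_set_scope.

(* Spectral radius of a real square matrix: the supremum of the moduli of its
   complex eigenvalues (sup of the empty set is 0, so a 0x0 matrix has
   spectral radius 0). *)
Definition spectral_radius (R : realType) (n : nat) (A : 'M[R]_n) : R :=
  sup [set r : R | exists l : R[i],
         eigenvalue (map_mx (fun x : R => (x%:C)%C) A) l /\ (r%:C)%C = `|l|].

Definition age_class (m : nat) (delta : 'I_m -> nat) : finType :=
  {i : 'I_m & 'I_(delta i).+1}.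

Definition dimS (m : nat) (delta : 'I_m -> nat) : nat := #|age_class delta|.

(* coordinate index of age class (i, a) (a is truncated into [0, delta_i]) *)
Definition idx (m : nat) (delta : 'I_m -> nat) (i : 'I_m) (a : nat)
  : 'I_(dimS delta) :=
  enum_rank (Tagged (fun j : 'I_m => 'I_(delta j).+1) (inord a : 'I_(delta i).+1)).

Definition yat (m : nat) (delta : 'I_m -> nat) (R : realType)
  (y : 'rV[R]_(dimS delta)) (i : 'I_m) (a : nat) : R := y 0 (idx delta i a).

Definition adults (m : nat) (delta : 'I_m -> nat) (R : realType)
  (y : 'rV[R]_(dimS delta)) : 'rV[R]_m :=
  \row_i yat y i (delta i).

Definition hmap (m : nat) (delta : 'I_m -> nat) (R : realType)
  (sigma : 'I_m -> nat -> R) (G : 'I_m -> 'rV[R]_m -> R)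
  (y : 'rV[R]_(dimS delta)) : 'rV[R]_(dimS delta) :=
  \row_k
    let i := tag (enum_val k) in
    let a := nat_of_ord (tagged (enum_val k)) in
    let x := adults y in
    if delta i == 0%N then
      sigma i 0%N * yat y i 0 + G i x * yat y i 0
    else if a == 0%N then G i x * yat y i (delta i)
    else if (a < delta i)%N then sigma i a.-1 * yat y i a.-1
    else sigma i (delta i).-1 * yat y i (delta i).-1
         + sigma i (delta i) * yat y i (delta i).

(* Jacobian matrix of h at y in the usual convention (row = output component,
   column = input variable); mathcomp's [jacobian] uses the transposed
   (row-vector) convention. *)
Definition Jac (m : nat) (delta : 'I_m -> nat) (R : realType)
  (sigma : 'I_m -> nat -> R) (G : 'I_m -> 'rV[R]_m -> R)
  (y : 'rV[R]_(dimS delta)) : 'M[R]_(dimS delta) :=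
  (jacobian (hmap sigma G) y)^T.

Definition surv_idx (m : nat) (delta : 'I_m -> nat) (Z : {set 'I_m})
  : {set 'I_(dimS delta)} :=
  [set k : 'I_(dimS delta) | tag (enum_val k) \notin Z].

Definition principal_submx (R : realType) (n : nat) (P : {set 'I_n})
  (A : 'M[R]_n) : 'M[R]_#|P| :=
  mxsub (fun j : 'I_#|P| => enum_val j) (fun j : 'I_#|P| => enum_val j) A.

(* At an equilibrium whose adults of the species in Z vanish, the fecundity term
   G_i(x) y_{delta_i|i} of a species i in Z has derivative G_i(x^) dy_{delta_i|i}, so the
   rows of the Jacobian belonging to i only involve the age classes of i, where they form
   a Leslie block.  Let v be a left eigenvector of J^ for the eigenvalue l.  If v does not
   vanish on the survivors' age classes, its restriction there is a left eigenvector of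
   J*, hence |l| < 1.  Otherwise v is nonzero on the age classes u_0, ..., u_delta of some
   species in Z, and the eigenvector equations read
     l u_b = sigma_b u_{b+1}  (b < delta),     l u_delta = G u_0 + sigma_delta u_delta.
   If |l| >= 1, the first ones give |u_0| <= (prod_b sigma_b) |u_delta|, and the last one
   then gives |u_delta| (1 - |G| prod_b sigma_b - sigma_delta) <= 0, so u = 0. *)

From HB Require Import structures.
From mathcomp Require Import all_boot all_order all_algebra.
From mathcomp Require Import all_classical all_reals all_analysis.
From mathcomp Require Import complex lra zify.
Import Order.TTheory GRing.Theory Num.Theory Normc.
Set Implicit Arguments. Unset Strict Implicit. Unset Printing Implicit Defensive.
Import numFieldNormedType.Exports.
Local Open Scope ring_scope.

Section ComplexModulus.
Variable R : realType.

Lemma normr_normc (z : R[i]) : `|z| = ((normc z)%:C)%C.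
Proof. by case: z. Qed.

Lemma normc_ge0 (z : R[i]) : 0 <= normc z.
Proof. by rewrite -lecR rmorph0 -normr_normc. Qed.

Lemma normc_real (c : R) : normc (c%:C)%C = `|c|.
Proof. by rewrite /normc /= expr0n /= addr0 sqrtr_sqr. Qed.

End ComplexModulus.

Lemma eigenvalues_in_roots (F : closedFieldType) n (A : 'M[F]_n) :
  exists rs : seq F, forall l, eigenvalue A l -> l \in rs.
Proof.
have [rs Hrs] := closed_field_poly_normal (char_poly A).
exists rs => l; rewrite eigenvalue_root_char Hrs.
by rewrite (monicP (char_poly_monic A)) scale1r root_prod_XsubC.
Qed.

Lemma spectral_radius_lt1E (R : realType) n (A : 'M[R]_n) :
  spectral_radius A < 1 <->
  forall l, eigenvalue (map_mx (fun x : R => x%:C%C) A) l -> normc l < 1.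
Proof.
rewrite /spectral_radius; set Ac := map_mx _ A; set S := (X in sup X).
have [rs Hrs] := eigenvalues_in_roots Ac.
pose c := \big[Num.max/0]_(l <- rs | eigenvalue Ac l) normc l.
have S_normc r : S r <-> exists2 l, eigenvalue Ac l & r = normc l.
  split=> [[l [Hl Hr]]|[l Hl ->]]; exists l; rewrite ?normr_normc //.
  by apply: complexI; rewrite Hr normr_normc.
have ubS : ubound S c.
  move=> r /S_normc [l Hl ->].
  exact: le_bigmax_seq (Hrs _ Hl) Hl.
split=> [Hsr l Hl|Hlt].
  apply: le_lt_trans Hsr; apply: ub_le_sup; first by exists c.
  by apply/S_normc; exists l.
have [->|/set0P neS] := eqVneq S set0; first by rewrite sup0.
by apply: le_lt_trans (ge_sup neS ubS) _; rewrite bigmax_lt.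
Qed.

Lemma eigenvalue_mxsub_left (F : fieldType) n (A : 'M[F]_n) (P : {set 'I_n})
    (v : 'rV[F]_n) l :
  v *m A = l *: v ->
  (forall k j, k \notin P -> j \in P -> v 0 k * A k j = 0) ->
  \row_(p < #|P|) v 0 (enum_val p) != 0 ->
  eigenvalue (mxsub (fun p : 'I_#|P| => enum_val p)
                    (fun p : 'I_#|P| => enum_val p) A) l.
Proof.
move=> Hv Hout nz; apply/eigenvalueP; exists (\row_p v 0 (enum_val p)) => //.
apply/rowP => q; rewrite !mxE.
have := congr1 (fun M : 'rV_n => M 0 (enum_val q)) Hv; rewrite !mxE => <-.
rewrite (bigID (mem P)) /= [X in _ = _ + X]big1 ?addr0; last first.
  by move=> k kP; apply: Hout => //; exact: enum_valP.
by rewrite [RHS]big_enum_val; apply: eq_bigr => p _; rewrite !mxE.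
Qed.

Lemma sum_natr_eq_mul (F : pzSemiRingType) (I : finType) (i0 : I) (f : I -> F) :
  \sum_i (i == i0)%:R * f i = f i0.
Proof.
by rewrite (bigD1 i0) //= eqxx mul1r big1 ?addr0 // => i /negbTE ->; rewrite mul0r.
Qed.

Lemma differentiable_row (R : realType) n p (f : 'rV[R]_n -> 'rV[R]_p) (x : 'rV[R]_n) :
  (forall k, differentiable (fun y => f y 0 k) x) -> differentiable f x.
Proof.
move=> df; have -> : f = \sum_(k < p) (fun y => f y 0 k *: delta_mx 0 k).
  by apply/funext => y; rewrite fct_sumE {1}(matrix_sum_delta (f y)) big_ord1.
by apply: differentiable_sum => k; exact: differentiableZl.
Qed.

Lemma jacobian_trE (R : realType) n p (f : 'rV[R]_n -> 'rV[R]_p) (x : 'rV[R]_n) k j :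
  differentiable f x ->
  (jacobian f x)^T k j = 'D_(delta_mx 0 j) (fun y => f y 0 k) x.
Proof.
move=> df; rewrite mxE.
have -> : jacobian f x j k = ('D_(delta_mx 0 j) f x) 0 k.
  by rewrite deriveEjacobian // -rowE [RHS]mxE.
by rewrite (derive_mx (diff_derivable df)) mxE.
Qed.

Lemma derive_coord (R : realType) n (j : 'I_n) (x v : 'rV[R]_n) :
  'D_v (fun y : 'rV[R]_n => y 0 j) x = v 0 j.
Proof. by rewrite -[in RHS](derive_id x v) (derive_mx (@derivable_id R _ x v)) mxE. Qed.

Lemma deriveM_fun (R : realType) (V : normedModType R) (f g : V -> R) x v :
  differentiable f x -> differentiable g x ->
  'D_v (fun y => f y * g y) x = f x * 'D_v g x + g x * 'D_v f x.
Proof. by move=> df dg; rewrite (deriveM (diff_derivable df) (diff_derivable dg)). Qed.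

Lemma deriveD_fun (R : realType) (V : normedModType R) (f g : V -> R) x v :
  differentiable f x -> differentiable g x ->
  'D_v (fun y => f y + g y) x = 'D_v f x + 'D_v g x.
Proof. by move=> df dg; rewrite (deriveD (diff_derivable df) (diff_derivable dg)). Qed.

(* The left eigenvector equations of the Leslie block of one species, read column by
   column: u b is the coordinate of age class b. *)
Section LeslieBlock.
Variables (R : realType) (s : nat -> R) (g : R) (d : nat) (l : R[i]).
Variable u : nat -> R[i].
Hypothesis s_ge0 : forall a, (a <= d)%N -> 0 <= s a.
Hypothesis u_shift : forall b, (b < d)%N -> l * u b = u b.+1 * (s b)%:C%C.
Hypothesis u_last : l * u d = u 0%N * g%:C%C + u d * (s d)%:C%C.

Lemma leslie_eigenvector_bound : 1 <= normc l -> forall b, (b <= d)%N ->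
  normc (u b) <= (\prod_(b <= a < d) s a) * normc (u d).
Proof.
move=> l1 b; move Ek: (d - b)%N => k; elim: k b Ek => [|k IH] b Ek hb.
  by rewrite (_ : b = d) ?big_geq ?mul1r //; lia.
have hbd : (b < d)%N by lia.
have step : normc (u b) <= s b * normc (u b.+1).
  have := congr1 (@normc R) (u_shift hbd).
  rewrite !normcM normc_real ger0_norm => [E|]; last exact/s_ge0/ltnW.
  by rewrite mulrC -E ler_peMl ?normc_ge0.
rewrite big_ltn // -mulrA; apply: (le_trans step).
by apply: ler_wpM2l; [exact/s_ge0/ltnW | apply: IH; lia].
Qed.

Lemma leslie_eigenvalue_lt1 : `|g| * \prod_(0 <= a < d) s a < 1 - s d ->
  forall a, (a <= d)%N -> u a != 0 -> normc l < 1.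
Proof.
move=> Hg a ha ua; rewrite ltNge; apply/negP => l1.
have bound := leslie_eigenvector_bound l1.
have ud0 : normc (u d) = 0.
  have Hle : normc l * normc (u d) <= normc (u 0%N) * `|g| + normc (u d) * s d.
    rewrite -normcM u_last (le_trans (le_normcD _ _)) //.
    by rewrite !normcM !normc_real (ger0_norm (s_ge0 _)).
  have h0 : `|g| * normc (u 0%N) <= `|g| * (\prod_(0 <= a < d) s a * normc (u d)).
    by apply: ler_wpM2l; [exact: normr_ge0 | exact: bound].
  have h1 : normc (u d) <= normc l * normc (u d) by rewrite ler_peMl ?normc_ge0.
  have Hg' : 0 < 1 - (`|g| * \prod_(0 <= a < d) s a + s d) by lra.
  apply/le_anti; rewrite normc_ge0 andbT -(pmulr_rle0 _ Hg'); lra.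
have /eq0_normc ua0 : normc (u a) = 0.
  apply/le_anti; rewrite normc_ge0 andbT.
  by rewrite -(mulr0 (\prod_(a <= b < d) s b)) -ud0 bound.
by rewrite ua0 eqxx in ua.
Qed.

End LeslieBlock.

Section AgeClassIndex.
Variables (m : nat) (delta : 'I_m -> nat).

Lemma idx_tag i b : tag (enum_val (idx delta i b)) = i.
Proof. by rewrite /idx enum_rankK. Qed.

Lemma idx_tagged i b : (b <= delta i)%N ->
  tagged (enum_val (idx delta i b)) = b :> nat.
Proof. by move=> hb; rewrite /idx enum_rankK /= inordK. Qed.

Lemma idx_enum_val (k : 'I_(dimS delta)) :
  k = idx delta (tag (enum_val k)) (tagged (enum_val k)).
Proof. by rewrite /idx inord_val -[LHS]enum_valK; case: (enum_val k). Qed.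

Lemma eq_idx (k : 'I_(dimS delta)) i c : (c <= delta i)%N ->
  (k == idx delta i c) = (tag (enum_val k) == i) && (tagged (enum_val k) == c :> nat).
Proof.
move=> hc; rewrite /idx -(enum_valK k) (inj_eq enum_rank_inj) enum_rankK.
case: (enum_val k) => i' a /=.
have [Ei|ne] := eqVneq i' i; last first.
  by apply/negbTE; apply: contra ne => /eqP/(congr1 tag)/= ->.
subst i; rewrite -tag_eqE /tag_eq eqxx /= tagged_asE.
by rewrite -val_eqE /= inordK.
Qed.

End AgeClassIndex.

Section AgeStructuredMap.
Variables (R : realType) (m : nat) (delta : 'I_m -> nat) (sigma : 'I_m -> nat -> R).
Local Notation V := 'rV[R]_(dimS delta).

Lemma differentiable_yat i a (x : V) : differentiable (fun y : V => yat y i a) x.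
Proof. exact: differentiable_coord. Qed.

Lemma differentiable_adults (x : V) : differentiable (@adults m delta R) x.
Proof.
by apply: differentiable_row => i; under eq_fun do rewrite mxE; exact: differentiable_yat.
Qed.

Lemma yat_delta_mx_idx i b i' c : (b <= delta i)%N -> (c <= delta i')%N ->
  yat (delta_mx 0 (idx delta i b) : V) i' c = ((i' == i) && (c == b))%:R.
Proof. by move=> hb hc; rewrite /yat mxE eqxx eq_idx // idx_tagged // idx_tag. Qed.

(* With the fecundities frozen to constants [g], [hmap] is linear; these are the
   columns of its matrix. *)
Lemma hmap_delta_mx_shift (g : 'I_m -> R) i b k : (b < delta i)%N ->
  hmap sigma (fun j _ => g j) (delta_mx 0 (idx delta i b)) 0 k =
    (k == idx delta i b.+1)%:R * sigma i b.
Proof.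
move=> hb; rewrite mxE eq_idx //; cbv zeta.
move: (enum_val k) => [i' a] /=; move: (nat_of_ord a) (ltn_ord a) => {}a; rewrite ltnS => ha.
rewrite !yat_delta_mx_idx ?leq_pred ?(leq_trans (leq_pred _)) ?(ltnW hb) //.
have [Ei|ne] := eqVneq i' i; last first.
  by rewrite /= !mulr0 mul0r addr0; do 3?case: ifP.
rewrite {i'}Ei in ha *; rewrite /=.
have [d0|d0] := eqVneq (delta i) 0%N; first lia.
have -> : (delta i == b) = false by apply/eqP; lia.
rewrite /= ?mulr0 ?addr0.
have [->|ab] := eqVneq a b.+1.
  rewrite mul1r eqxx /=; case: ifP => [_|/negbT]; first by rewrite mulr1.
  rewrite -leqNgt => hd; have -> : (delta i).-1 = b by lia.
  by rewrite eqxx mulr1.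
rewrite mul0r; case: ifP => // a0; case: ifP => ad.
  by rewrite (_ : a.-1 == b = false) ?mulr0 //; apply/eqP; lia.
by rewrite (_ : (delta i).-1 == b = false) ?mulr0 //; apply/eqP; lia.
Qed.

Lemma hmap_delta_mx_last (g : 'I_m -> R) i k :
  hmap sigma (fun j _ => g j) (delta_mx 0 (idx delta i (delta i))) 0 k =
    (k == idx delta i 0%N)%:R * g i + (k == idx delta i (delta i))%:R * sigma i (delta i).
Proof.
rewrite mxE !eq_idx //; cbv zeta.
move: (enum_val k) => [i' a] /=; move: (nat_of_ord a) (ltn_ord a) => {}a; rewrite ltnS => ha.
rewrite !yat_delta_mx_idx ?leq_pred ?(leq_trans (leq_pred _)) //.
have [Ei|ne] := eqVneq i' i; last first.
  by rewrite /= !mulr0 !mul0r addr0; do 3?case: ifP.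
rewrite {i'}Ei in ha *; rewrite /=.
have [d0|d0] := eqVneq (delta i) 0%N.
  by rewrite d0 in ha *; rewrite (_ : a = 0%N) ?eqxx ?mulr1 ?mul1r 1?addrC //; lia.
rewrite eqxx mulr1 (_ : (delta i).-1 == delta i = false); last by apply/eqP; lia.
have [a0|a0] := eqVneq a 0%N; first by rewrite a0 eq_sym (negbTE d0) mul1r mul0r addr0.
rewrite mul0r add0r; case: ifP => ad.
  have -> : (a.-1 == delta i) = false by apply/eqP; lia.
  have -> : (a == delta i) = false by apply/eqP; lia.
  by rewrite mulr0 mul0r.
have -> : a = delta i by lia.
by rewrite eqxx /= mulr0 add0r mulr1 mul1r.
Qed.

Lemma hmap_delta_mx_offblock (g : 'I_m -> R) (j k : 'I_(dimS delta)) :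
  tag (enum_val k) != tag (enum_val j) ->
  hmap sigma (fun i _ => g i) (delta_mx 0 j) 0 k = 0.
Proof.
move=> kj; rewrite (idx_enum_val j).
set i := tag (enum_val j) in kj *; set b := nat_of_ord (tagged (enum_val j)).
have hb : (b <= delta i)%N by rewrite -ltnS ltn_ord.
have k_out c : (c <= delta i)%N -> (k == idx delta i c) = false.
  by move=> hc; rewrite eq_idx // (negbTE kj).
have [bd|db] := ltnP b (delta i).
  by rewrite hmap_delta_mx_shift // k_out // mul0r.
have -> : b = delta i by apply/eqP; rewrite eqn_leq hb.
by rewrite hmap_delta_mx_last !k_out // !mul0r addr0.
Qed.

Section Jacobian.
Variable G : 'I_m -> 'rV[R]_m -> R.
Hypothesis G_diff : forall i x, differentiable (G i) x.

Lemma differentiable_G_adults i (x : V) :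
  differentiable (fun y : V => G i (adults y)) x.
Proof. exact: differentiable_comp (differentiable_adults x) (G_diff i _). Qed.

Lemma differentiable_hmap (x : V) : differentiable (hmap sigma G) x.
Proof.
apply: differentiable_row => k; under eq_fun do rewrite mxE.
have dD (f g : V -> R) : differentiable f x -> differentiable g x ->
  differentiable (fun y : V => f y + g y : R) x := @differentiableD _ _ _ f g x.
have dM (f g : V -> R) : differentiable f x -> differentiable g x ->
  differentiable (fun y : V => f y * g y : R) x := @differentiableM _ _ f g x.
have dc (c : R) : differentiable (fun _ : V => c) x := differentiable_cst c x.
cbv zeta; case: (_ == 0%N); [|case: (_ == 0%N); [|case: (_ < _)%N]];
  repeat apply: dD; apply: dM;
  solve [exact: dc | exact: differentiable_G_adults | exact: differentiable_yat].
Qed.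

Lemma derive_hmap_extinct (x v : V) k :
  yat x (tag (enum_val k)) (delta (tag (enum_val k))) = 0 ->
  'D_v (fun y : V => hmap sigma G y 0 k) x =
    hmap sigma (fun i _ => G i (adults x)) v 0 k.
Proof.
move=> x_ext; under eq_fun do rewrite mxE; rewrite mxE; cbv zeta.
set i := tag (enum_val k) in x_ext *.
have D_cst (c : R) b : 'D_v (fun y : V => c * yat y i b) x = c * yat v i b.
  rewrite deriveM_fun; [|exact: differentiable_cst|exact: differentiable_yat].
  by rewrite derive_cst derive_coord mulr0 addr0.
have D_G : 'D_v (fun y : V => G i (adults y) * yat y i (delta i)) x =
    G i (adults x) * yat v i (delta i).
  rewrite deriveM_fun; [|exact: differentiable_G_adults|exact: differentiable_yat].
  by rewrite derive_coord x_ext mul0r addr0.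
have d_cst (c : R) b : differentiable (fun y : V => c * yat y i b) x :=
  differentiableM (differentiable_cst c x) (differentiable_yat i b x).
have d_G : differentiable (fun y : V => G i (adults y) * yat y i (delta i)) x :=
  differentiableM (differentiable_G_adults i x) (differentiable_yat _ _ x).
case: ifP => [/eqP d0|_].
  by rewrite d0 in d_G D_G; rewrite deriveD_fun ?D_cst ?D_G.
case: ifP => _; first exact: D_G.
case: ifP => _; first exact: D_cst.
by rewrite deriveD_fun ?D_cst.
Qed.

Lemma Jac_extinct (x : V) k j :
  yat x (tag (enum_val k)) (delta (tag (enum_val k))) = 0 ->
  Jac sigma G x k j = hmap sigma (fun i _ => G i (adults x)) (delta_mx 0 j) 0 k.
Proof.
move=> x_ext; rewrite /Jac jacobian_trE ?derive_hmap_extinct //.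
exact: differentiable_hmap.
Qed.

Lemma Jac_extinct_offblock (x : V) k j :
  yat x (tag (enum_val k)) (delta (tag (enum_val k))) = 0 ->
  tag (enum_val k) != tag (enum_val j) -> Jac sigma G x k j = 0.
Proof. by move=> x_ext kj; rewrite Jac_extinct // hmap_delta_mx_offblock. Qed.

Section ExtinctLeftEigenvector.
Variables (x : V) (v : 'rV[R[i]]_(dimS delta)) (l : R[i]).
Hypothesis v_left : v *m map_mx (fun r : R => r%:C%C) (Jac sigma G x) = l *: v.
Hypothesis v_extinct : forall k,
  v 0 k != 0 -> yat x (tag (enum_val k)) (delta (tag (enum_val k))) = 0.

Lemma left_eigen_column j : l * v 0 j =
  \sum_k v 0 k * (hmap sigma (fun i _ => G i (adults x)) (delta_mx 0 j) 0 k)%:C%C.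
Proof.
have := congr1 (fun w : 'rV_(dimS delta) => w 0 j) v_left; rewrite !mxE => <-.
apply: eq_bigr => k _; rewrite mxE.
have [->|vk] := eqVneq (v 0 k) 0; first by rewrite !mul0r.
by rewrite Jac_extinct // v_extinct.
Qed.

Lemma left_eigen_shift i b : (b < delta i)%N ->
  l * v 0 (idx delta i b) = v 0 (idx delta i b.+1) * (sigma i b)%:C%C.
Proof.
move=> hb; rewrite left_eigen_column.
under eq_bigr => k _ do rewrite hmap_delta_mx_shift // rmorphM rmorph_nat mulrCA.
exact: sum_natr_eq_mul.
Qed.

Lemma left_eigen_last i :
  l * v 0 (idx delta i (delta i)) = v 0 (idx delta i 0%N) * (G i (adults x))%:C%C
    + v 0 (idx delta i (delta i)) * (sigma i (delta i))%:C%C.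
Proof.
rewrite left_eigen_column.
under eq_bigr => k _ do
  rewrite hmap_delta_mx_last rmorphD !rmorphM !rmorph_nat mulrDr !(mulrCA (v 0 k)).
by rewrite big_split /= !sum_natr_eq_mul.
Qed.

Lemma left_eigen_extinct_lt1 :
  v != 0 -> (forall i a, (a <= delta i)%N -> 0 <= sigma i a) ->
  (forall k, v 0 k != 0 ->
     `|G (tag (enum_val k)) (adults x)| *
       \prod_(0 <= a < delta (tag (enum_val k))) sigma (tag (enum_val k)) a
     < 1 - sigma (tag (enum_val k)) (delta (tag (enum_val k)))) ->
  normc l < 1.
Proof.
case/rV0Pn=> k0 vk0 s_ge0 cond; set i := tag (enum_val k0).
apply: (@leslie_eigenvalue_lt1 R (sigma i) (G i (adults x)) (delta i) l
  (fun b => v 0 (idx delta i b)) _ _ _ _ (tagged (enum_val k0))).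
- exact: s_ge0.
- exact: left_eigen_shift.
- exact: left_eigen_last.
- exact: cond.
- by rewrite -ltnS.
- by rewrite -idx_enum_val.
Qed.

End ExtinctLeftEigenvector.

End Jacobian.

End AgeStructuredMap.

Theorem theorem4 (R : realType) (m : nat) (delta : 'I_m -> nat)
  (sigma : 'I_m -> nat -> R) (G : 'I_m -> 'rV[R]_m -> R)
  (yhat : 'rV[R]_(dimS delta)) (Z : {set 'I_m}) :
  (0 < m)%N ->
  (forall i (a : nat), (a < delta i)%N -> 0 < sigma i a <= 1) ->
  (forall i, 0 < sigma i (delta i) < 1) ->
  (forall i x, differentiable (G i) x) ->
  hmap sigma G yhat = yhat ->
  Z != finset.set0 ->
  (forall i, i \in Z -> adults yhat 0 i = 0) ->
  (forall i, i \notin Z -> 0 < adults yhat 0 i) ->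
  (forall i, adults yhat 0 i = 0 -> adults yhat 0 i * G i (adults yhat) = 0) ->
  spectral_radius (principal_submx (surv_idx delta Z) (Jac sigma G yhat)) < 1 ->
  (forall i, i \in Z ->
     `|G i (adults yhat)| * \prod_(0 <= a < delta i) sigma i a
       < 1 - sigma i (delta i)) ->
  spectral_radius (Jac sigma G yhat) < 1.
Proof.
move=> _ s_young s_adult dG _ _ Z_extinct _ _ sr_surv cond.
have extinct i : i \in Z -> yat yhat i (delta i) = 0 by move/Z_extinct; rewrite mxE.
apply/spectral_radius_lt1E => l /eigenvalueP [v vJ v_nz].
set P := surv_idx delta Z.
have [w_nz|/negPn/eqP w0] := boolP (\row_(p < #|P|) v 0 (enum_val p) != 0).
  apply: (spectral_radius_lt1E _).1 sr_surv _ _.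
  rewrite /principal_submx map_mxsub; apply: eigenvalue_mxsub_left vJ _ w_nz => k j.
  rewrite !inE negbK mxE => kZ jZ; rewrite Jac_extinct_offblock ?extinct ?mulr0 //.
  by apply: contraNneq jZ => <-.
have v_surv k : tag (enum_val k) \notin Z -> v 0 k = 0.
  move=> kZ; have kP : k \in P by rewrite inE.
  have := congr1 (fun w : 'rV[R[i]]_#|P| => w 0 (enum_rank_in kP k)) w0.
  by rewrite !mxE enum_rankK_in.
have v_extinct k : v 0 k != 0 -> tag (enum_val k) \in Z.
  by move=> vk; apply: contraNT vk => /v_surv ->.
apply: (left_eigen_extinct_lt1 dG vJ _ v_nz) => [k /v_extinct/extinct //|i a|k /v_extinct].
  rewrite leq_eqVlt => /orP[/eqP->|/s_young/andP[/ltW //]].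
  by have /andP[/ltW] := s_adult i.
exact: cond.
Qed.
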